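(* Let $\mathcal{J}$ be a Jordan algebra of finite dimension $n$ over a field $\mathcal{F}$ of characteristic different from $2$, let $\Lambda=(\lambda_{i,j})_{i,j=1,\dots,n}$ be an $n\times n$ matrix all of whose entries are non-zero elements of $\mathcal{F}$, and let $\mathcal{V}$ be a basis of $\mathcal{J}$. Let $\Delta:\mathcal{J}\to\mathcal{J}$ be a map such that for every $x,y\in\mathcal{J}$ there is a derivation $D_{x,y}$ of $\mathcal{J}$ which is $\Lambda$-symmetric with respect to $\mathcal{V}$ and satisfies $\Delta(x)=D_{x,y}(x)$ and $\Delta(y)=D_{x,y}(y)$. Then $\Delta$ is a derivation.
   Context: A derivation of $\mathcal{J}$ is a linear map $D$ with $D(xy)=D(x)y+xD(y)$ for all $x,y$. For a linear map $\psi$ on $\mathcal{J}$ and the ordered basis $\mathcal{V}=(v_1,\dots,v_n)$, the matrix of $\psi$ is $(x_{i,j})$ with $\psi(v_j)=\sum_i x_{i,j}v_i$; $\psi$ is $\Lambda$-symmetric with respect to $\mathcal{V}$ if this matrix equals $(\lambda_{i,j}a_{i,j})_{i,j}$ for some symmetric matrix $(a_{i,j})$. *)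

From mathcomp Require Import all_boot all_algebra.
Set Implicit Arguments. Unset Strict Implicit. Unset Printing Implicit Defensive.
Import GRing.Theory.
Local Open Scope ring_scope.

Definition bilinear_mul (F : fieldType) (J : vectType F) (mul : J -> J -> J) :=
  (forall x, linear (mul x)) /\ (forall y, linear (mul^~ y)).

Definition is_jordan_algebra (F : fieldType) (J : vectType F) (mul : J -> J -> J) :=
  [/\ bilinear_mul mul,
      (forall x y, mul x y = mul y x) &
      (forall x y, mul (mul x y) (mul x x) = mul x (mul y (mul x x)))].

Definition is_derivation (F : fieldType) (J : vectType F) (mul : J -> J -> J)
    (D : J -> J) :=
  linear D /\ forall x y, D (mul x y) = mul (D x) y + mul x (D y).

Definition mx_of_map (F : fieldType) (J : vectType F) (n : nat)
    (V : n.-tuple J) (psi : J -> J) : 'M[F]_n :=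
  \matrix_(i < n, j < n) coord V i (psi (tnth V j)).

Definition Lambda_symmetric (F : fieldType) (J : vectType F) (n : nat)
    (Lam : 'M[F]_n) (V : n.-tuple J) (psi : J -> J) :=
  exists A : 'M[F]_n, A^T = A /\
    mx_of_map V psi = \matrix_(i < n, j < n) (Lam i j * A i j).

From mathcomp Require Import all_boot all_algebra.
From HB Require Import structures.
From mathcomp Require Import ring.
Set Implicit Arguments.
Unset Strict Implicit.
Local Open Scope ring_scope.
Import GRing.Theory.

(* Linearity: if D is a derivation agreeing with Delta at x and at v_i, then
   Lambda-symmetry expresses the i-th coordinate of D x = Delta x through x and
   the coordinates of D v_i = Delta v_i alone, so each coordinate of Delta x is a
   fixed linear form in x.  Leibniz rule: comparing Delta with a derivation at z
   and z z gives Delta (z z) = 2 z Delta z, which polarizes since char F <> 2. *)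

Section LambdaSymmetric.

Variables (F : fieldType) (J : vectType F) (n : nat) (Lam : 'M[F]_n) (V : n.-tuple J).

Lemma Lambda_symmetric_coord (psi : J -> J) (i j : 'I_n) :
  Lam j i != 0 -> Lambda_symmetric Lam V psi ->
  coord V i (psi (tnth V j)) = Lam i j / Lam j i * coord V j (psi (tnth V i)).
Proof.
move=> Lji_neq0 [A [symA psiE]].
have entry k l : coord V k (psi (tnth V l)) = Lam k l * A k l.
  by have := congr1 (fun M : 'M[F]_n => M k l) psiE; rewrite /mx_of_map !mxE.
have symA_ij : A i j = A j i by rewrite -[in LHS]symA mxE.
by rewrite !entry symA_ij mulrA divfK.
Qed.

Lemma Lambda_symmetric_linear_coord (psi : J -> J) (i : 'I_n) (x : J) :
  basis_of fullv V -> (forall j, Lam j i != 0) ->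
  linear psi -> Lambda_symmetric Lam V psi ->
  coord V i (psi x) =
    \sum_(j < n) coord V j x * (Lam i j / Lam j i * coord V j (psi (tnth V i))).
Proof.
move=> baseV Lam_neq0 psi_lin psi_sym.
pose psiL : {linear J -> J} := HB.pack psi (GRing.isLinear.Build _ _ _ _ psi psi_lin).
rewrite {1}(coord_basis baseV (memvf x)) -[psi _]/(psiL _) !linear_sum.
apply: eq_bigr => j _; rewrite !linearZ /= -tnth_nth.
by rewrite (Lambda_symmetric_coord (Lam_neq0 j) psi_sym).
Qed.

Lemma locally_Lambda_symmetric_linear (Delta : J -> J) :
  basis_of fullv V -> (forall i j, Lam i j != 0) ->
  (forall x (i : 'I_n), exists psi : J -> J,
      [/\ linear psi, Lambda_symmetric Lam V psi,
          Delta x = psi x & Delta (tnth V i) = psi (tnth V i)]) ->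
  linear Delta.
Proof.
move=> baseV Lam_neq0 Delta_loc.
pose c i j := Lam i j / Lam j i * coord V j (Delta (tnth V i)).
have DeltaE x : Delta x = \sum_(i < n) (\sum_(j < n) coord V j x * c i j) *: tnth V i.
  rewrite {1}(coord_basis baseV (memvf (Delta x))).
  apply: eq_bigr => i _; rewrite -tnth_nth; congr (_ *: _).
  have [psi [psi_lin psi_sym -> psi_vi]] := Delta_loc x i.
  rewrite (Lambda_symmetric_linear_coord _ baseV) //.
  by apply: eq_bigr => j _; rewrite /c psi_vi.
move=> a x y; rewrite !DeltaE scaler_sumr -big_split; apply: eq_bigr => i _.
rewrite /= scalerA -scalerDl mulr_sumr -big_split /=; congr (_ *: _).
by apply: eq_bigr => j _; rewrite linearP /=; ring.
Qed.

End LambdaSymmetric.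

Lemma polarization_eq0 (F : fieldType) (U W : lmodType F) (B : U -> U -> W) :
  2%:R != 0 :> F ->
  (forall x y z, B (x + y) z = B x z + B y z) ->
  (forall x y, B x y = B y x) ->
  (forall z, B z z = 0) ->
  forall x y, B x y = 0.
Proof.
move=> two_neq0 B_addl B_sym B_diag x y.
have B_addr z u v : B z (u + v) = B z u + B z v by rewrite !(B_sym z) B_addl.
have := B_diag (x + y); rewrite B_addl !B_addr !B_diag add0r addr0 (B_sym y x).
by move/eqP; rewrite -mulr2n -scaler_nat scaler_eq0 (negPf two_neq0) => /eqP.
Qed.

Section SquareRule.

Variables (F : fieldType) (J : lmodType F) (mul : J -> J -> J).
Hypotheses (mul_addl : forall x y z, mul (x + y) z = mul x z + mul y z)
           (mulC : forall x y, mul x y = mul y x).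

Lemma derivation_sqr (D : J -> J) :
  (forall x y, D (mul x y) = mul (D x) y + mul x (D y)) ->
  forall z, D (mul z z) = mul z (D z) *+ 2.
Proof. by move=> D_leibniz z; rewrite D_leibniz mulC mulr2n. Qed.

Lemma sqr_rule_leibniz (Delta : J -> J) :
  2%:R != 0 :> F -> linear Delta ->
  (forall z, Delta (mul z z) = mul z (Delta z) *+ 2) ->
  forall x y, Delta (mul x y) = mul (Delta x) y + mul x (Delta y).
Proof.
move=> two_neq0 Delta_lin Delta_sqr x y; apply/eqP; rewrite -subr_eq0; apply/eqP.
pose B u v := Delta (mul u v) - (mul (Delta u) v + mul u (Delta v)).
have Delta_add := (GRing.semilinear_linear Delta_lin).2.
suff: B x y = 0 by [].
apply: (polarization_eq0 two_neq0) => [u v w|u v|z].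
- by rewrite /B mul_addl !Delta_add !mul_addl [RHS]addrACA -opprD [in RHS]addrACA.
- by rewrite /B mulC (mulC (Delta u)) (mulC u) [mul v _ + _]addrC.
- by rewrite /B Delta_sqr (mulC (Delta z)) -mulr2n subrr.
Qed.

End SquareRule.

Theorem theorem3p1 (F : fieldType) (J : vectType F) (mul : J -> J -> J)
    (n : nat) (Lam : 'M[F]_n) (V : n.-tuple J) (Delta : J -> J) :
  (2%N) \notin [pchar F] ->
  is_jordan_algebra mul ->
  \dim (fullv : {vspace J}) = n ->
  basis_of fullv V ->
  (forall i j, Lam i j != 0) ->
  (forall x y : J, exists D : J -> J,
      [/\ is_derivation mul D, Lambda_symmetric Lam V D,
          Delta x = D x & Delta y = D y]) ->
  is_derivation mul Delta.
Proof.
move=> char2 [[_ mul_linl] mulC _] _ baseV Lam_neq0 Delta_loc.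
have two_neq0 : 2%:R != 0 :> F by apply: contra char2 => two_eq0; rewrite inE two_eq0.
have mul_addl x y z : mul (x + y) z = mul x z + mul y z.
  exact: (GRing.semilinear_linear (mul_linl z)).2.
have Delta_lin : linear Delta.
  apply: (locally_Lambda_symmetric_linear baseV Lam_neq0) => x i.
  have [D [[D_lin _] D_sym Dx Dvi]] := Delta_loc x (tnth V i).
  by exists D.
split=> //; apply: (sqr_rule_leibniz mul_addl mulC two_neq0 Delta_lin) => z.
have [D [[_ D_leibniz] _ Dz Dzz]] := Delta_loc z (mul z z).
by rewrite Dzz (derivation_sqr mulC D_leibniz) Dz.
Qed.
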